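(* Let $\Lambda$ be an artin algebra and let $f\colon X\to Y$ be an irreducible morphism in the category ${\rm proj}\,\Lambda$. Then ${\rm Coker}\,f\notin {\rm proj}\,\Lambda$.
   Context: ${\rm mod}\,\Lambda$ denotes the category of finitely generated right $\Lambda$-modules and ${\rm proj}\,\Lambda$ its full subcategory of projective modules. A morphism $f$ in an additive category $\mathcal{C}$ is irreducible if it is neither a split monomorphism (section) nor a split epimorphism (retraction), and whenever $f=gh$ in $\mathcal{C}$, either $h$ is a section or $g$ is a retraction. The cokernel is computed in ${\rm mod}\,\Lambda$. *)

From HB Require Import structures.
From mathcomp Require Import all_boot all_algebra.
Set Implicit Arguments. Unset Strict Implicit. Unset Printing Implicit Defensive.
Import GRing.Theory.
Local Open Scope ring_scope.

Definition is_ideal (R : comPzRingType) (I : R -> Prop) : Prop :=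
  [/\ I 0, (forall x y, I x -> I y -> I (x - y)) & (forall a x, I x -> I (a * x))].

Definition artinian (R : comPzRingType) : Prop :=
  forall I : nat -> R -> Prop,
    (forall n, is_ideal (I n)) ->
    (forall n x, I n.+1 x -> I n x) ->
    exists N, forall n, (N <= n)%N -> forall x, I n x <-> I N x.

Definition fingen (S : pzRingType) (V : lmodType S) : Prop :=
  exists n (v : 'I_n -> V), forall x : V, exists a : 'I_n -> S,
    x = \sum_(i < n) a i *: v i.

Definition artin_algebra (R : comPzRingType) (L : algType R) : Prop :=
  artinian R /\ fingen L.

(* Right L-modules are left modules over the converse ring L^c. *)

Definition projective (S : pzRingType) (P : lmodType S) : Prop :=
  forall (M N : lmodType S) (p : {linear M -> N}) (g : {linear P -> N}),
    (forall y : N, exists x : M, p x = y) ->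
    exists h : {linear P -> M}, forall x, p (h x) = g x.

Definition in_proj (S : pzRingType) (P : lmodType S) : Prop :=
  fingen P /\ projective P.

Definition is_section (S : pzRingType) (A B : lmodType S) (h : {linear A -> B}) :=
  exists r : {linear B -> A}, forall x, r (h x) = x.
Definition is_retraction (S : pzRingType) (A B : lmodType S) (g : {linear A -> B}) :=
  exists s : {linear B -> A}, forall y, g (s y) = y.

Definition irreducible_in_proj (S : pzRingType) (X Y : lmodType S)
    (f : {linear X -> Y}) : Prop :=
  [/\ ~ is_section f, ~ is_retraction f &
      forall (Z : lmodType S) (h : {linear X -> Z}) (g : {linear Z -> Y}),
        in_proj Z -> (forall x, f x = g (h x)) ->
        is_section h \/ is_retraction g].

Definition is_cokernel (S : pzRingType) (X Y C : lmodType S)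
    (f : {linear X -> Y}) (pi : {linear Y -> C}) : Prop :=
  (forall c : C, exists y, pi y = c) /\
  (forall y : Y, pi y = 0 <-> exists x, y = f x).

From HB Require Import structures.
From mathcomp Require Import all_boot all_algebra.
Set Implicit Arguments.
Unset Strict Implicit.
Unset Printing Implicit Defensive.
Import GRing.Theory.
Local Open Scope ring_scope.

(* If Coker f were projective, the cokernel map pi : Y -> C would split by
   some s, and e := 1 - s pi would be an endomorphism of Y with e f = f.
   Irreducibility of the factorization f = e f forces e to be a split
   epimorphism (f is not a section); but pi e = 0, so pi = 0, i.e. f is onto
   the projective module Y, hence a split epimorphism: a contradiction. *)

Section IrreducibleProjective.
Variable S : pzRingType.

Lemma projective_surj_retraction (P M : lmodType S) (p : {linear M -> P}) :
  projective P -> (forall y, exists x, p x = y) -> is_retraction p.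
Proof. by move=> projP p_surj; have [s ps] := projP _ _ p idfun p_surj; exists s. Qed.

Lemma irreducible_fixed_retraction (X Y : lmodType S) (f : {linear X -> Y})
    (e : {linear Y -> Y}) :
  irreducible_in_proj f -> in_proj Y -> (forall x, e (f x) = f x) ->
  is_retraction e.
Proof.
case=> f_not_sec _ f_irr projY efE.
by case: (f_irr Y f e projY) => // x; rewrite efE.
Qed.

Lemma split_complement_retraction_eq0 (Y C : lmodType S)
    (pi : {linear Y -> C}) (s : {linear C -> Y}) :
  (forall c, pi (s c) = c) -> is_retraction (idfun \- (s \o pi)) ->
  forall y, pi y = 0.
Proof.
move=> pisK [t tK] y.
by rewrite -(tK y) /= linearB /= pisK subrr.
Qed.

Lemma cokernel0_surj (X Y C : lmodType S) (f : {linear X -> Y})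
    (pi : {linear Y -> C}) :
  is_cokernel f pi -> (forall y, pi y = 0) -> forall y, exists x, f x = y.
Proof. by case=> _ kerE pi0 y; have [x ->] := (kerE y).1 (pi0 y); exists x. Qed.

End IrreducibleProjective.

Theorem lemma2p1 (R : comPzRingType) (L : algType R) (HL : artin_algebra L)
    (X Y : lmodType L^c) (HX : in_proj X) (HY : in_proj Y)
    (f : {linear X -> Y}) (Hf : irreducible_in_proj f)
    (C : lmodType L^c) (pi : {linear Y -> C}) (Hpi : is_cokernel f pi) :
  ~ in_proj C.
Proof.
move=> [_ projC]; have [_ f_not_retr _] := Hf.
have [s pisK] := projective_surj_retraction projC Hpi.1.
have piE x : pi (f x) = 0 by apply/Hpi.2; exists x.
have e_retr : is_retraction (idfun \- (s \o pi)).
  by apply: irreducible_fixed_retraction Hf HY _ => x; rewrite /= piE linear0 subr0.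
have pi0 := split_complement_retraction_eq0 pisK e_retr.
exact/f_not_retr/(projective_surj_retraction HY.2)/(cokernel0_surj Hpi pi0).
Qed.
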